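(* Let $k$ be a field, $V$ a $k$-vector space, $\varphi\in\operatorname{End}_k(V)$ a finite potent endomorphism with index $i(\varphi)=r$ and AST-decomposition $V=W_\varphi\oplus U_\varphi$. If $\psi\in\operatorname{End}_k(V)$ is a G-Drazin inverse of $\varphi$, then $W_\varphi$ and $U_\varphi$ are invariant under $\psi$.
   Context: An endomorphism $\varphi$ of a $k$-vector space $V$ is finite potent if $\varphi^n(V)$ is finite dimensional for some $n$. For such $\varphi$, the AST-decomposition is $V=U_\varphi\oplus W_\varphi$ where $U_\varphi=\{v\in V: \varphi^m(v)=0 \text{ for some } m\}$ and $W_\varphi=\{v\in V: p(\varphi)(v)=0 \text{ for some } p(x)\in k[x] \text{ coprime to } x\}$; both are $\varphi$-invariant, $\varphi|_{U_\varphi}$ is nilpotent, $W_\varphi$ is finite dimensional and $\varphi|_{W_\varphi}$ is an automorphism. The index $i(\varphi)$ is the nilpotency order of $\varphi|_{U_\varphi}$. An endomorphism $\psi\in\operatorname{End}_k(V)$ is a G-Drazin inverse of $\varphi$ if $\varphi\circ\psi\circ\varphi=\varphi$ and $\psi\circ\varphi^{r}=\varphi^{r}\circ\psi$, where $r=i(\varphi)$. *)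

From HB Require Import structures.
From mathcomp Require Import all_boot all_order all_algebra.
Set Implicit Arguments. Unset Strict Implicit. Unset Printing Implicit Defensive.
Import GRing.Theory.
Local Open Scope ring_scope.

Section FinitePotent.
Variables (K : fieldType) (V : lmodType K).

Definition fin_dim (S : V -> Prop) : Prop :=
  exists s : seq V, forall v, S v ->
    exists c : 'I_(size s) -> K, v = \sum_(i < size s) c i *: s`_i.

Definition finite_potent (phi : V -> V) : Prop :=
  exists n : nat, fin_dim (fun w => exists v, w = iter n phi v).

Definition poly_endo (p : {poly K}) (phi : V -> V) (v : V) : V :=
  \sum_(i < size p) p`_i *: iter i phi v.

Definition U_part (phi : V -> V) (v : V) : Prop :=
  exists m : nat, iter m phi v = 0.

Definition W_part (phi : V -> V) (v : V) : Prop :=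
  exists p : {poly K}, coprimep p 'X /\ poly_endo p phi v = 0.

Definition is_index (phi : V -> V) (r : nat) : Prop :=
  (forall u, U_part phi u -> iter r phi u = 0) /\
  (forall m, (forall u, U_part phi u -> iter m phi u = 0) -> (r <= m)%N).

Definition G_Drazin (phi psi : V -> V) (r : nat) : Prop :=
  (forall v, phi (psi (phi v)) = phi v) /\
  (forall v, psi (iter r phi v) = iter r phi (psi v)).

End FinitePotent.

From HB Require Import structures.
From mathcomp Require Import all_boot all_order all_algebra.
Import GRing.Theory.
Local Open Scope ring_scope.

(* If p is coprime to x, then p(0) <> 0, so p(phi) w = 0 expresses w as phi
   applied to a polynomial in phi of w; hence the kernel of p(phi) lies in every
   phi^n(V).  For w in W, writing w = phi y = phi^r x gives phi (psi w) = w and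
   psi w = phi^r (psi x); then z := p(phi) (psi x) satisfies
   phi^(r+1) z = p(phi) (phi (psi w)) = p(phi) w = 0, so z lies in U and
   p(phi) (psi w) = phi^r z = 0.  For u in U, phi^r (psi u) = psi (phi^r u) = 0. *)

Section FinitePotent.
Local Set Implicit Arguments. Local Unset Strict Implicit.
Variables (K : fieldType) (V : lmodType K) (phi : {linear V -> V}).
Implicit Types (p : {poly K}) (v w : V).

Lemma iter_linear n : linear (iter n phi).
Proof. by elim: n => [|n IH] a x y //=; rewrite IH linearP. Qed.

HB.instance Definition _ n :=
  GRing.isLinear.Build K V V *:%R (iter n phi) (iter_linear n).

Lemma poly_endo_linear p : linear (poly_endo p phi).
Proof.
move=> a x y; rewrite /poly_endo scaler_sumr -big_split; apply: eq_bigr => i _.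
by rewrite linearP scalerDr !scalerA mulrC.
Qed.

HB.instance Definition _ p :=
  GRing.isLinear.Build K V V *:%R (poly_endo p phi) (poly_endo_linear p).

Lemma iter_poly_endo n p v :
  iter n phi (poly_endo p phi v) = poly_endo p phi (iter n phi v).
Proof.
rewrite /poly_endo linear_sum; apply: eq_bigr => i _.
by rewrite linearZ /= -!iterD addnC.
Qed.

Lemma poly_endo_coef0 p v :
  poly_endo p phi v =
    p`_0 *: v + phi (\sum_(i < (size p).-1) p`_i.+1 *: iter i phi v).
Proof.
rewrite /poly_endo; case sp: (size p) => [|n].
  by rewrite nth_default ?sp // scale0r add0r !big_ord0 linear0.
rewrite big_ord_recl linear_sum; congr (_ + _).
by apply: eq_bigr => i _; rewrite linearZ.
Qed.

Lemma ker_poly_endo_image p w : p`_0 != 0 -> poly_endo p phi w = 0 ->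
  exists2 x, w = phi x & poly_endo p phi x = 0.
Proof.
move=> p0 pw0.
pose S := \sum_(i < (size p).-1) p`_i.+1 *: iter i phi w.
exists (- (p`_0)^-1 *: S).
  apply: (scalerI p0); rewrite linearZ scalerA mulrN divff // scaleN1r.
  by apply/eqP; rewrite -addr_eq0 -poly_endo_coef0 pw0.
rewrite linearZ /S linear_sum big1 => [|i _] /=; first by rewrite scaler0.
by rewrite linearZ /= -iter_poly_endo pw0 linear0 scaler0.
Qed.

Lemma ker_poly_endo_iter_image p w : p`_0 != 0 -> poly_endo p phi w = 0 ->
  forall n, exists x, w = iter n phi x.
Proof.
move=> p0 + n; elim: n w => [|n IH] w pw0; first by exists w.
have [y -> py0] := ker_poly_endo_image p0 pw0.
by have [x ->] := IH y py0; exists x; rewrite -iterS iterSr.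
Qed.

Section GDrazin.
Variables (psi : {linear V -> V}) (r : nat).
Hypotheses (r_index : is_index phi r) (psi_GD : G_Drazin phi psi r).

Lemma G_Drazin_U_part u : U_part phi u -> U_part phi (psi u).
Proof. by move=> Uu; exists r; rewrite -psi_GD.2 r_index.1 // linear0. Qed.

Lemma G_Drazin_W_part w : W_part phi w -> W_part phi (psi w).
Proof.
move=> [p [pX pw0]]; exists p; split; first exact: pX.
have p0 : p`_0 != 0 by rewrite -horner_coef0 -coprimepX.
have [y wE _] := ker_poly_endo_image p0 pw0.
have [x wEr] := ker_poly_endo_iter_image p0 pw0 r.
have phi_psi_w : phi (psi w) = w by rewrite wE psi_GD.1.
have psi_wE : psi w = iter r phi (psi x) by rewrite wEr psi_GD.2.
have U_px : U_part phi (poly_endo p phi (psi x)).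
  by exists r.+1; rewrite iter_poly_endo iterS -psi_wE phi_psi_w.
by rewrite psi_wE -iter_poly_endo r_index.1.
Qed.

End GDrazin.
End FinitePotent.

Theorem corollary3p3 (K : fieldType) (V : lmodType K)
    (phi psi : {linear V -> V}) (r : nat) :
  finite_potent phi ->
  is_index phi r ->
  G_Drazin phi psi r ->
  (forall w, W_part phi w -> W_part phi (psi w)) /\
  (forall u, U_part phi u -> U_part phi (psi u)).
Proof.
move=> _ r_index psi_GD; split.
  exact: G_Drazin_W_part r_index psi_GD.
exact: G_Drazin_U_part r_index psi_GD.
Qed.
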